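(* For every $m\ge0$, substituting $\lambda_i=q^{-2(i-1)}$, $i=1,\dots,n$, into $\vartheta_m(q^{-2},\lambda)$ gives $\hat n$.
   Context: $\hat m=\frac{1-q^{-2m}}{1-q^{-2}}$. For indeterminates $\lambda=(\lambda_1,\dots,\lambda_n)$ and $m\ge1$, $\vartheta_m(q^{-2},\lambda)=\sum_{\ell=1}^n(1-q^{-2})^{\ell-1}\sum_{\mathbf d}\sum_{1\le j_1<\dots<j_\ell\le n}\lambda_{j_1}^{d_1}\cdots\lambda_{j_\ell}^{d_\ell}$, where $\mathbf d=(d_1,\dots,d_\ell)$ runs over $\ell$-tuples of positive integers with sum $m$; $\vartheta_0(q^{-2},\lambda)=\hat n$. *)

From mathcomp Require Import all_boot all_order all_algebra.
Set Implicit Arguments. Unset Strict Implicit. Unset Printing Implicit Defensive.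
Import Order.TTheory GRing.Theory Num.Theory.
Local Open Scope ring_scope.

(* hat m = (1 - t^m)/(1 - t), where t plays the role of q^{-2}. *)
Definition qhat {F : fieldType} (t : F) (m : nat) : F := (1 - t ^+ m) / (1 - t).

Definition is_composition (m l : nat) (d : {ffun 'I_l -> 'I_m.+1}) : bool :=
  [forall k, (0 < d k)%N] && ((\sum_(k < l) (d k : nat))%N == m).

Definition is_increasing (n l : nat) (j : {ffun 'I_l -> 'I_n}) : bool :=
  [forall k1 : 'I_l, forall k2 : 'I_l, (k1 < k2)%N ==> (j k1 < j k2)%N].

(* vartheta_m(t, lambda), lambda = (lambda_1..lambda_n) stored 0-indexed. *)
Definition vartheta {F : fieldType} (t : F) (n : nat) (lam : 'I_n -> F) (m : nat) : F :=
  if m == 0%N then qhat t n else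
  \sum_(1 <= l < n.+1) (1 - t) ^+ l.-1 *
    \sum_(d : {ffun 'I_l -> 'I_m.+1} | is_composition d)
      \sum_(j : {ffun 'I_l -> 'I_n} | is_increasing j)
        \prod_(k < l) lam (j k) ^+ (d k).

(* Multiplied by 1 - t, vartheta_m(t, lambda) becomes a sum over the functions
   c : {1..n} -> N of total mass m: the pair (d, j) of a composition and an
   increasing index tuple is the function with c (j_k) = d_k, and it carries
   the weight (1 - t)^#supp(c) prod_i lambda_i^(c_i).  This is the coefficient
   of X^m in prod_i (1 - t lambda_i X) / (1 - lambda_i X).  For
   lambda_i = t^(i-1) the product telescopes to (1 - t^n X) / (1 - X), whose
   coefficient of X^m, for m >= 1, is 1 - t^n = (1 - t) hat(n).  Only
   coefficients of degree <= m matter, so the factors are truncated to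
   polynomials. *)

From mathcomp Require Import all_boot all_order all_algebra ring.
Set Implicit Arguments. Unset Strict Implicit. Unset Printing Implicit Defensive.
Import Order.TTheory GRing.Theory.

Lemma is_increasingP n l (j : {ffun 'I_l -> 'I_n}) :
  reflect {homo j : a b / (a < b)%O} (is_increasing j).
Proof.
apply: (iffP forallP) => [inc a b ab|inc a]; first exact: implyP (forallP (inc a) b) ab.
by apply/forallP => b; apply/implyP => /inc.
Qed.

Lemma increasing_inj n l (j : {ffun 'I_l -> 'I_n}) : is_increasing j -> injective j.
Proof. by move=> /is_increasingP /le_mono; apply: inc_inj. Qed.

Lemma lt_sorted_enum_ord n (A : {pred 'I_n}) : sorted <%O (enum A).
Proof.
rewrite /enum_mem -enumT lt_sorted_filter //.
by have := iota_ltn_sorted 0 n; rewrite -val_enum_ord sorted_map.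
Qed.

Section Support.
Variables N M : nat.
Implicit Types c : {ffun 'I_N -> 'I_M.+1}.

Definition supp c : {set 'I_N} := [set i | 0 < c i].

Lemma big_supp R (idx : R) (op : Monoid.law idx) (F : 'I_N -> nat -> R) c :
  (forall i, F i 0 = idx) ->
  \big[op/idx]_(i in supp c) F i (c i) = \big[op/idx]_i F i (c i).
Proof. by move=> F0; apply: big_rmcond => i; rewrite inE -eqn0Ngt => /eqP ->. Qed.

Lemma sum_supp c : \sum_(i in supp c) c i = \sum_i c i.
Proof. exact: (@big_supp _ _ _ (fun _ a => a)). Qed.

End Support.

Definition scatter N M l (d : {ffun 'I_l -> 'I_M.+1}) (j : {ffun 'I_l -> 'I_N}) :
    {ffun 'I_N -> 'I_M.+1} :=
  [ffun i => if [pick k | j k == i] is Some k then d k else ord0].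

Section Scatter.
Variables (N M l : nat) (d : {ffun 'I_l -> 'I_M.+1}) (j : {ffun 'I_l -> 'I_N}).
Hypothesis j_inc : is_increasing j.

Lemma scatter_at k : scatter d j (j k) = d k.
Proof.
rewrite ffunE; case: pickP => [k' /eqP /(increasing_inj j_inc) -> //|/(_ k)].
by rewrite eqxx.
Qed.

Lemma scatter_out i : (forall k, j k != i) -> scatter d j i = ord0.
Proof. by move=> ji; rewrite ffunE; case: pickP => // k; rewrite (negPf (ji k)). Qed.

Hypothesis d_comp : is_composition d.

Lemma supp_scatter : supp (scatter d j) = [set j k | k in 'I_l].
Proof.
case/andP: d_comp => /forallP d_pos _; apply/setP => i; rewrite inE.
apply/idP/imsetP => [|[k _ ->]]; last by rewrite scatter_at.
case: (pickP (fun k => j k == i)) => [k /eqP <- _|ji]; first by exists k.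
by rewrite scatter_out // => k; rewrite ji.
Qed.

Lemma enum_supp_scatter : enum (supp (scatter d j)) = map j (enum 'I_l).
Proof.
apply: lt_sorted_eq; first exact: lt_sorted_enum_ord.
  by apply: homo_sorted (lt_sorted_enum_ord _); apply/is_increasingP.
move=> i; rewrite mem_enum supp_scatter.
by apply/imsetP/mapP => -[k _ ->]; exists k; rewrite ?mem_enum.
Qed.

Lemma scatter_spec :
  (\sum_i (scatter d j i : nat) == M) && (#|supp (scatter d j)| == l).
Proof.
rewrite -sum_supp supp_scatter.
rewrite card_imset ?card_ord ?eqxx ?andbT; last exact: increasing_inj.
rewrite big_imset /=; last by move=> a b _ _ /(increasing_inj j_inc).
under eq_bigr => k _ do rewrite scatter_at.
by case/andP: d_comp.
Qed.

End Scatter.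

Section Gather.
Variables (N M l : nat) (c : {ffun 'I_N.+1 -> 'I_M.+1}).

(* The default ord0 is never used once #|supp c| = l. *)
Definition supp_enum : {ffun 'I_l -> 'I_N.+1} :=
  [ffun k : 'I_l => nth ord0 (enum (supp c)) k].

Definition gather := ([ffun k => c (supp_enum k)], supp_enum).

Hypothesis c_spec : (\sum_i (c i : nat) == M) && (#|supp c| == l).

Lemma gather_spec :
  [&& is_composition gather.1, is_increasing gather.2 & scatter gather.1 gather.2 == c].
Proof.
case/andP: c_spec => /eqP c_sum /eqP c_card.
have size_supp : size (enum (supp c)) = l by rewrite -cardE.
have enum_in k : nth ord0 (enum (supp c)) (k : 'I_l) \in supp c.
  by rewrite -mem_enum mem_nth ?size_supp.
have inc : is_increasing supp_enum.
  apply/is_increasingP => a b ab; rewrite !ffunE.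
  by rewrite lt_sorted_ltn_nth ?inE ?size_supp //; exact: lt_sorted_enum_ord.
apply/and3P; split => //.
- apply/andP; split.
    by apply/forallP => k; rewrite !ffunE; have := enum_in k; rewrite inE.
  apply/eqP; rewrite -[RHS]c_sum -sum_supp -[RHS]big_enum /=.
  rewrite [RHS](big_nth ord0) size_supp big_mkord.
  by apply: eq_bigr => k _; rewrite !ffunE.
- apply/eqP/ffunP => i; rewrite ffunE.
  case: pickP => [k /eqP <-|notj]; first by rewrite !ffunE.
  case: (boolP (i \in supp c)) => [i_supp|]; last first.
    by rewrite inE -eqn0Ngt => /eqP c0; apply: val_inj; rewrite /= c0.
  have i_lt : index i (enum (supp c)) < l by rewrite -size_supp index_mem mem_enum.
  by have := notj (Ordinal i_lt); rewrite ffunE nth_index ?mem_enum ?eqxx.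
Qed.

End Gather.

Lemma gather_scatter N M l (d : {ffun 'I_l -> 'I_M.+1}) (j : {ffun 'I_l -> 'I_N.+1}) :
  is_composition d -> is_increasing j -> gather l (scatter d j) = (d, j).
Proof.
move=> d_comp j_inc; have enumE : supp_enum l (scatter d j) = j.
  apply/ffunP => k; rewrite ffunE enum_supp_scatter //.
  by rewrite (nth_map k) ?size_enum_ord // nth_ord_enum.
by rewrite /gather enumE; congr pair; apply/ffunP => k; rewrite ffunE scatter_at.
Qed.

Local Open Scope ring_scope.

Lemma sum_compositions_increasing (R : comPzSemiRingType) N M l
    (f : 'I_N.+1 -> nat -> R) :
  (forall i, f i 0 = 1) ->
  \sum_(d : {ffun 'I_l -> 'I_M.+1} | is_composition d)
    \sum_(j : {ffun 'I_l -> 'I_N.+1} | is_increasing j) \prod_(k < l) f (j k) (d k)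
  = \sum_(c : {ffun 'I_N.+1 -> 'I_M.+1} | (\sum_i (c i : nat) == M)%N && (#|supp c| == l))
      \prod_i f i (c i).
Proof.
move=> f0; rewrite pair_big_dep /=.
rewrite [RHS](reindex_onto (fun p => scatter p.1 p.2) (gather l)) /=; last first.
  by move=> c /gather_spec /and3P[_ _ /eqP].
apply: eq_big => [[d j]|[d j] /andP[/= d_comp j_inc]] /=.
- apply/idP/idP => [/andP[d_comp j_inc]|/andP[c_spec /eqP e]].
    by rewrite scatter_spec // gather_scatter // eqxx.
  by move: (gather_spec c_spec); rewrite e => /and3P[-> ->].
- rewrite -big_supp // supp_scatter // big_imset /=; last first.
    by move=> a b _ _ /(increasing_inj j_inc).
  by apply: eq_bigr => k _; rewrite scatter_at.
Qed.

Lemma coef_prod_sumXn (R : comNzSemiRingType) N M (a : 'I_N -> nat -> R) :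
  (\prod_(i < N) \sum_(k < M.+1) a i k *: 'X^k)`_M =
  \sum_(c : {ffun 'I_N -> 'I_M.+1} | (\sum_i (c i : nat) == M)%N) \prod_i a i (c i).
Proof.
rewrite bigA_distr_bigA /=.
under eq_bigr => c _ do rewrite scaler_prod prodrXr.
by rewrite coef_sumMXn.
Qed.

Section ThetaFactor.
Variables (R : comNzRingType) (t : R).

Definition theta_coef (x : R) a := (if (0 < a)%N then 1 - t else 1) * x ^+ a.

(* The truncation at degree M of (1 - t x X) / (1 - x X). *)
Definition theta_factor M x : {poly R} := \sum_(a < M.+1) theta_coef x a *: 'X^a.

Lemma prod_theta_coef N M (x : 'I_N -> R) (c : {ffun 'I_N -> 'I_M.+1}) :
  \prod_i theta_coef (x i) (c i) = (1 - t) ^+ #|supp c| * \prod_i x i ^+ c i.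
Proof.
rewrite big_split /= -prodr_const; congr (_ * _).
by rewrite [RHS]big_mkcond; apply: eq_bigr => i _; rewrite inE.
Qed.

Lemma mul_theta_factor M x :
  (1 - x *: 'X) * theta_factor M x =
  1 - (t * x) *: 'X - ((1 - t) * x ^+ M.+1) *: 'X^(M.+1).
Proof.
rewrite -!mul_polyC; elim: M => [|M IH].
  rewrite /theta_factor big_ord1 /theta_coef /= mul1r expr0 scale1r expr1 mulr1.
  rewrite !rmorphM !rmorphB rmorph1; ring.
rewrite /theta_factor big_ord_recr /= mulrDr -/(theta_factor M x) -mul_polyC IH.
rewrite /theta_coef /= !rmorphM !rmorphB rmorph1 !rmorphXn !exprS; ring.
Qed.

Lemma coefM_eq_le M (p q r : {poly R}) :
  (forall k, (k <= M)%N -> p`_k = q`_k) ->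
  forall k, (k <= M)%N -> (p * r)`_k = (q * r)`_k.
Proof.
move=> pq k kM; rewrite !coefM; apply: eq_bigr => i _.
by rewrite pq // (leq_trans _ kM) // -ltnS.
Qed.

Lemma coef_mul_theta_factor M x k : (k <= M)%N ->
  ((1 - x *: 'X) * theta_factor M x)`_k = (1 - (t * x) *: 'X)`_k.
Proof.
by move=> kM; rewrite mul_theta_factor coefB coefZ coefXn ltn_eqF ?mulr0 ?subr0.
Qed.

Lemma coef_telescope_theta_factor M n k : (k <= M)%N ->
  ((1 - 'X) * \prod_(i < n) theta_factor M (t ^+ i))`_k = (1 - t ^+ n *: 'X)`_k.
Proof.
elim: n k => [|n IH] k kM; first by rewrite big_ord0 mulr1 expr0 scale1r.
by rewrite big_ord_recr /= mulrA (coefM_eq_le _ IH) // coef_mul_theta_factor // -exprS.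
Qed.

Lemma coef_prod_theta_factor_geom M n k : (0 < k <= M)%N ->
  (\prod_(i < n) theta_factor M (t ^+ i))`_k = 1 - t ^+ n.
Proof.
set P := \prod_(i < n) _.
suff coefP k' : (k' <= M)%N -> P`_k' = if k' == 0%N then 1 else 1 - t ^+ n.
  by case/andP => k_gt0 kM; rewrite coefP // eqn0Ngt k_gt0.
elim: k' => [|k' IHk] kM; have := coef_telescope_theta_factor n kM;
  rewrite mulrBl mul1r !coefB coefXM coef1 coefZ coefX /=.
  by rewrite subr0 mulr0 subr0.
rewrite IHk ?(ltnW kM) //; case: k' {IHk kM} => [|k'] /=.
  by move/eqP; rewrite mulr1 sub0r subr_eq => /eqP ->; rewrite addrC.
by move/eqP; rewrite mulr0 subr0 subr_eq0 => /eqP.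
Qed.

End ThetaFactor.

Lemma partition_sum_nat (R : nmodType) (I : finType) (P : pred I) (g : I -> nat) a b
    (F : I -> R) :
  (forall c, P c -> (a <= g c < b)%N) ->
  \sum_(a <= l < b) \sum_(c | P c && (g c == l)) F c = \sum_(c | P c) F c.
Proof.
move=> gP; rewrite (exchange_big_dep P) /= => [|l c _ /andP[] //].
apply: eq_bigr => c Pc; under eq_bigl do rewrite Pc eq_sym.
by rewrite big_nat1_eq gP.
Qed.

Lemma vartheta_coef_theta_factor (F : fieldType) (t : F) N (lam : 'I_N.+1 -> F) m :
  (0 < m)%N ->
  (1 - t) * vartheta t lam m = (\prod_i theta_factor t m (lam i))`_m.
Proof.
move=> m_gt0; rewrite /vartheta eqn0Ngt m_gt0 /= mulr_sumr.
transitivity (\sum_(1 <= l < N.+2)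
  \sum_(c : {ffun 'I_N.+1 -> 'I_m.+1} | (\sum_i (c i : nat) == m)%N && (#|supp c| == l))
    (1 - t) ^+ #|supp c| * \prod_i lam i ^+ c i).
  apply: eq_big_nat => l /andP[l_gt0 _].
  rewrite mulrA -exprS prednK //.
  rewrite (sum_compositions_increasing _ _ (f := fun i a => lam i ^+ a)) //.
  by rewrite mulr_sumr; apply: eq_bigr => c /andP[_ /eqP ->].
rewrite partition_sum_nat => [|c /eqP c_sum]; last first.
  rewrite ltnS card_gt0; apply/andP; split.
    apply: contraTneq m_gt0 => supp0.
    by rewrite -lt0n -c_sum -sum_supp supp0 big_set0.
  by have := max_card (supp c); rewrite card_ord.
symmetry; apply: etrans; first exact: (coef_prod_sumXn m (fun i => theta_coef t (lam i))).
by apply: eq_bigr => c _; rewrite prod_theta_coef.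
Qed.

Theorem lemma4p4 (F : fieldType) (q : F) (n m : nat) :
  q != 0 -> q ^- 2 != 1 -> (0 < n)%N ->
  vartheta (q ^- 2) (fun i : 'I_n => (q ^- 2) ^+ i) m = qhat (q ^- 2) n.
Proof.
move=> _; set t := q ^- 2 => t_neq1; case: n => [|N] // _.
have [->|m_gt0] := posnP m; first by [].
have t_unit : 1 - t != 0 by rewrite subr_eq0 eq_sym.
apply: (mulfI t_unit); rewrite vartheta_coef_theta_factor //.
rewrite coef_prod_theta_factor_geom ?m_gt0 ?leqnn //.
by rewrite /qhat mulrC divfK.
Qed.
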